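(* Let $F$ be a preordered semifield of characteristic zero satisfying $1 \geq 0$, and suppose that $u \in F$ is polynomially universal. Then for all nonzero $x, y \in F$, the following are equivalent: (1) $f(x) \geq f(y)$ for every monotone semiring homomorphism $f : F \to \mathbb{R}_+$. (2) For every rational $\varepsilon > 0$, there is $m \in \mathbb{N}$ such that $x + \sum_{j=0}^m \varepsilon^{j+1} u^j \geq y$. (3) For every $r \in \mathbb{R}_+$ and rational $\varepsilon > 0$, there is a polynomial $p \in \mathbb{Q}_+[X]$ such that $p(r) \leq \varepsilon$ and $x + p(u) \geq y$. (4) For every $r \in \mathbb{R}_+$ and rational $\varepsilon > 0$, there is a polynomial $p \in \mathbb{Q}_+[X]$ such that $p(r) \leq 1 + \varepsilon$ and $p(u)\, x \geq y$.
   Context: A semiring is a set with two commutative monoid structures, addition (neutral element $0$) and multiplication (neutral element $1$), with multiplication distributing over addition; a semiring homomorphism preserves $+$, $\cdot$, $0$, $1$. A semifield is a semiring in which every nonzero element has a multiplicative inverse. It has characteristic zero if the unique homomorphism $\mathbb{N} \to F$ is injective; a semifield of characteristic zero is then a $\mathbb{Q}_+$-algebra, which gives meaning to $\varepsilon^{j+1} u^j$ and $p(u)$ for rational coefficients. A preordered semifield is a semifield with a preorder $\geq$ such that $x \geq y$ implies $x+z \geq y+z$ and $xz \geq yz$ for all $z$. A semiring homomorphism is monotone if it preserves the preorder ($\mathbb{R}_+$ with its usual order). An element $u \geq 1$ is polynomially universal if for every nonzero $x \in F$ there is $p \in \mathbb{N}[X]$ with $p(u)\,x \geq 1$ and $p(u)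 \geq x$. *)

From HB Require Import structures.
From mathcomp Require Import all_boot all_order all_algebra.
From mathcomp Require Import reals.
Set Implicit Arguments. Unset Strict Implicit. Unset Printing Implicit Defensive.
Import Order.TTheory GRing.Theory Num.Theory.
Local Open Scope ring_scope.

(* A preordered semifield: a commutative (nontrivial) semiring F, a
   multiplicative inverse function [inv] for nonzero elements (the semifield
   axiom), and a preorder [ge] (ge x y reads "x >= y") compatible with + and *. *)
Definition preordered_semifield (F : comNzSemiRingType) (inv : F -> F)
    (ge : F -> F -> Prop) : Prop :=
  [/\ (forall x : F, x != 0 -> x * inv x = 1),
      (forall x, ge x x),
      (forall x y z, ge x y -> ge y z -> ge x z),
      (forall x y z, ge x y -> ge (x + z) (y + z)) &
      (forall x y z, ge x y -> ge (x * z) (y * z))].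

Definition char_zero (F : comNzSemiRingType) : Prop :=
  injective (fun n : nat => (n%:R : F)).

(* Q_+-algebra structure: image of a nonnegative rational in F *)
Definition ratF (F : comNzSemiRingType) (inv : F -> F) (q : rat) : F :=
  (absz (numq q))%:R * inv ((absz (denq q))%:R).

Definition evalN (F : comNzSemiRingType) (p : {poly nat}) (u : F) : F :=
  (map_poly (fun n : nat => (n%:R : F)) p).[u].

Definition nonneg_poly (p : {poly rat}) : Prop := forall i, 0 <= p`_i.

Definition evalQ (F : comNzSemiRingType) (inv : F -> F) (p : {poly rat}) (u : F) : F :=
  (map_poly (ratF inv) p).[u].

Definition evalR (R : realType) (p : {poly rat}) (r : R) : R :=
  (map_poly (fun q : rat => (ratr q : R)) p).[r].

Definition poly_universal (F : comNzSemiRingType) (ge : F -> F -> Prop) (u : F) : Prop :=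
  ge u 1 /\
  forall x : F, x != 0 ->
    exists p : {poly nat}, ge (evalN p u * x) 1 /\ ge (evalN p u) x.

Definition monotone_hom (F : comNzSemiRingType) (ge : F -> F -> Prop)
    (R : realType) (f : F -> R) : Prop :=
  (forall x, 0 <= f x) /\
  [/\ f 0 = 0, f 1 = 1,
      (forall x y, f (x + y) = f x + f y),
      (forall x y, f (x * y) = f x * f y) &
      (forall x y, ge x y -> f y <= f x)].

From HB Require Import structures.
From mathcomp Require Import all_boot all_order all_algebra.
From mathcomp Require Import reals ring lra boolp classical_sets.
Import Order.TTheory GRing.Theory Num.Theory.
Local Open Scope ring_scope.
Set Implicit Arguments. Unset Strict Implicit. Unset Printing Implicit Defensive.

(* (2), (3) and (4) each imply (1): apply a monotone homomorphism f and let
   eps go to 0, using that the geometric sum of the eps^(j+1) f(u)^j is at most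
   2 eps once eps f(u) <= 1/2.  Conversely (2) gives (3) with
   p = sum_j eps^(j+1) X^j, and (1) gives (4) by running (1) => (2) => (3) on
   the pair 1, y/x and taking 1 + p.

   The substance is (1) => (2).  If x + sum_(j<=m) eps^(j+1) u^j >= y failed
   for every m, Zorn's lemma would give a maximal semiring preorder extending
   >= in which all these inequalities still fail.  Maximality makes it total
   (adjoining a >= b or b >= a would otherwise both reach the series, and the
   two witnesses cancel), polynomial universality of u makes it Archimedean, and
   it orders the rationals faithfully.  Then a |-> sup {q in Q_+ | a >= q} is a
   monotone homomorphism to R_+ with f(x) < f(y), contradicting (1). *)

Definition hom_ge (R : realType) (F : comNzSemiRingType) (ge : F -> F -> Prop)
    (x y : F) : Prop :=
  forall f : F -> R, monotone_hom ge f -> f y <= f x.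

Definition geom_term (F : comNzSemiRingType) (inv : F -> F) (u : F) (eps : rat)
    (j : nat) : F :=
  ratF inv (eps ^+ j.+1) * u ^+ j.

Definition geom_series (F : comNzSemiRingType) (inv : F -> F) (u : F) (eps : rat)
    (m : nat) : F :=
  \sum_(j < m.+1) geom_term inv u eps j.

Definition series_ge (F : comNzSemiRingType) (inv : F -> F) (ge : F -> F -> Prop)
    (u x y : F) : Prop :=
  forall eps : rat, 0 < eps -> exists m : nat, ge (x + geom_series inv u eps m) y.

Definition add_poly_ge (R : realType) (F : comNzSemiRingType) (inv : F -> F)
    (ge : F -> F -> Prop) (u x y : F) : Prop :=
  forall (r : R) (eps : rat), 0 <= r -> 0 < eps ->
    exists p : {poly rat}, nonneg_poly p /\
      evalR p r <= ratr eps /\ ge (x + evalQ inv p u) y.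

Definition mul_poly_ge (R : realType) (F : comNzSemiRingType) (inv : F -> F)
    (ge : F -> F -> Prop) (u x y : F) : Prop :=
  forall (r : R) (eps : rat), 0 <= r -> 0 < eps ->
    exists p : {poly rat}, nonneg_poly p /\
      evalR p r <= 1 + ratr eps /\ ge (evalQ inv p u * x) y.

Lemma horner_map_wide (A B : nzSemiRingType) (g : A -> B) (p : {poly A}) (z : B) n :
  g 0 = 0 -> (size p <= n)%N -> (map_poly g p).[z] = \sum_(i < n) g p`_i * z ^+ i.
Proof.
move=> g0 pn; rewrite (@horner_coef_wide _ n).
  by apply: eq_bigr => i _; rewrite coef_map_id0.
exact: leq_trans (size_poly _ _) pn.
Qed.

Lemma horner_mapD (A B : nzSemiRingType) (g : A -> B) (p q : {poly A}) (z : B) :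
  g 0 = 0 -> (forall i, g (p`_i + q`_i) = g p`_i + g q`_i) ->
  (map_poly g (p + q)).[z] = (map_poly g p).[z] + (map_poly g q).[z].
Proof.
move=> g0 gD; set n := maxn (size p) (size q).
rewrite (@horner_map_wide _ _ g (p + q) z n) //; last exact: size_polyD.
rewrite (@horner_map_wide _ _ g p z n) ?leq_maxl //.
rewrite (@horner_map_wide _ _ g q z n) ?leq_maxr //.
by rewrite -big_split; apply: eq_bigr => i _; rewrite coefD gD mulrDl.
Qed.

Lemma horner_map1 (A B : nzSemiRingType) (g : A -> B) (z : B) :
  g 0 = 0 -> g 1 = 1 -> (map_poly g 1).[z] = 1.
Proof.
move=> g0 g1; rewrite (@horner_map_wide _ _ g _ z 1) ?size_poly1 //.
by rewrite big_ord1 coef1 /= g1 mul1r.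
Qed.

Definition semiring_preorder (F : comNzSemiRingType) (R : F -> F -> Prop) : Prop :=
  [/\ (forall x, R x x), (forall x y z, R x y -> R y z -> R x z),
      (forall x y z, R x y -> R (x + z) (y + z)) &
      (forall x y z, R x y -> R (x * z) (y * z))].

Lemma preordered_semifield_sp (F : comNzSemiRingType) (inv : F -> F)
    (ge : F -> F -> Prop) :
  preordered_semifield inv ge -> semiring_preorder ge.
Proof. by case=> _ h1 h2 h3 h4; split. Qed.

Lemma preordered_semifield_mulrV (F : comNzSemiRingType) (inv : F -> F)
    (ge : F -> F -> Prop) :
  preordered_semifield inv ge -> forall x : F, x != 0 -> x * inv x = 1.
Proof. by case. Qed.

Lemma sp_eq (F : comNzSemiRingType) (R1 R2 : F -> F -> Prop) :
  (forall a b, R1 a b <-> R2 a b) -> semiring_preorder R1 -> semiring_preorder R2.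
Proof.
move=> E [h1 h2 h3 h4]; split.
- by move=> a; apply/E.
- by move=> a b c /E hab /E hbc; apply/E; exact: h2 hab hbc.
- by move=> a b c /E h; apply/E; exact: h3.
- by move=> a b c /E h; apply/E; exact: h4.
Qed.

Section SemiringPreorder.
Variables (F : comNzSemiRingType) (R : F -> F -> Prop).
Hypothesis spR : semiring_preorder R.

Lemma sp_refl a : R a a. Proof. by case: spR. Qed.

Lemma sp_trans b a c : R a b -> R b c -> R a c.
Proof. by case: spR => _ h _ _; apply: h. Qed.

Lemma sp_addr z a b : R a b -> R (a + z) (b + z).
Proof. by case: spR => _ _ h _; apply: h. Qed.

Lemma sp_addl z a b : R a b -> R (z + a) (z + b).
Proof. by rewrite ![z + _]addrC; apply: sp_addr. Qed.

Lemma sp_mulr z a b : R a b -> R (a * z) (b * z).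
Proof. by case: spR => _ _ _ h; apply: h. Qed.

Lemma sp_mull z a b : R a b -> R (z * a) (z * b).
Proof. by rewrite ![z * _]mulrC; apply: sp_mulr. Qed.

Lemma sp_add a b c d : R a b -> R c d -> R (a + c) (b + d).
Proof. by move=> hab hcd; apply: sp_trans (sp_addr _ hab) (sp_addl _ hcd). Qed.

Lemma sp_mul a b c d : R a b -> R c d -> R (a * c) (b * d).
Proof. by move=> hab hcd; apply: sp_trans (sp_mulr _ hab) (sp_mull _ hcd). Qed.

Lemma sp_sum n (f g : 'I_n -> F) :
  (forall i, R (f i) (g i)) -> R (\sum_(i < n) f i) (\sum_(i < n) g i).
Proof. by move=> fg; apply: (big_ind2 R) => //; [exact: sp_refl | exact: sp_add]. Qed.

Lemma sp_exp n a b : R a b -> R (a ^+ n) (b ^+ n).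
Proof.
move=> hab; elim: n => [|n IH]; first by rewrite !expr0; exact: sp_refl.
by rewrite !exprS; exact: sp_mul.
Qed.

Lemma sp_muln_cancel n a b d :
  R (a + d) (b + d) -> R (n%:R * a + d) (n%:R * b + d).
Proof.
move=> h; elim: n => [|n IH]; first by rewrite !mul0r; exact: sp_refl.
have -> : n.+1%:R * a + d = a + (n%:R * a + d) by rewrite -natr1; ring.
have -> : n.+1%:R * b + d = (b + d) + n%:R * b by rewrite -natr1; ring.
apply: (sp_trans (sp_addl a IH)).
by rewrite [n%:R * b + d]addrC addrA; exact: sp_addr.
Qed.

Lemma sp_cross a b w1 w2 c d :
  R (c + w1 * b) (d + w1 * a) -> R (c + w2 * a) (d + w2 * b) ->
  R ((w1 + w2) * c + w1 * w2 * b) ((w1 + w2) * d + w1 * w2 * b).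
Proof.
move=> h1 h2.
have k1 := sp_addl (w1 * c) (sp_mull w2 h1).
have k2 := sp_addr (w2 * d) (sp_mull w1 h2).
have E1 : (w1 + w2) * c + w1 * w2 * b = w1 * c + w2 * (c + w1 * b) by ring.
have E2 : w1 * c + w2 * (d + w1 * a) = w1 * (c + w2 * a) + w2 * d by ring.
have E3 : w1 * (d + w2 * b) + w2 * d = (w1 + w2) * d + w1 * w2 * b by ring.
by rewrite E1 -E3; apply: sp_trans k1 _; rewrite E2.
Qed.

Hypothesis R10 : R 1 0.

Lemma sp_ge0 a : R a 0.
Proof. by have := sp_mull a R10; rewrite mulr1 mulr0. Qed.

Lemma sp_addr_ge a b : R (a + b) a.
Proof. by have := sp_addl a (sp_ge0 b); rewrite addr0. Qed.

Lemma sp_addl_ge a b : R (b + a) a.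
Proof. by rewrite addrC; apply: sp_addr_ge. Qed.

End SemiringPreorder.

Definition adjoin (F : comNzSemiRingType) (R : F -> F -> Prop) (a b : F) :
    F -> F -> Prop :=
  fun c d => exists w, R (c + w * b) (d + w * a).

Lemma adjoin_sub (F : comNzSemiRingType) (R : F -> F -> Prop) a b c d :
  R c d -> adjoin R a b c d.
Proof. by exists 0; rewrite !mul0r !addr0. Qed.

Lemma adjoin_pair (F : comNzSemiRingType) (R : F -> F -> Prop) a b :
  semiring_preorder R -> adjoin R a b a b.
Proof. by exists 1; rewrite !mul1r addrC; exact: sp_refl. Qed.

Lemma sp_adjoin (F : comNzSemiRingType) (R : F -> F -> Prop) a b :
  semiring_preorder R -> semiring_preorder (adjoin R a b).
Proof.
move=> spR; split.
- by move=> c; exact: adjoin_sub (sp_refl spR c).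
- move=> c e d [w1 h1] [w2 h2]; exists (w1 + w2).
  have k1 := sp_addr spR (w2 * b) h1; rewrite [e + _ + _]addrAC in k1.
  have := sp_trans spR k1 (sp_addr spR (w1 * a) h2).
  by rewrite !mulrDl !addrA (addrAC d).
- move=> c d z [w h]; exists w.
  by rewrite (addrAC c) (addrAC d); exact: sp_addr.
- move=> c d z [w h]; exists (w * z).
  by rewrite (mulrAC w z b) (mulrAC w z a) -!mulrDl; exact: sp_mulr.
Qed.

Section RationalScalars.
Variables (F : comNzSemiRingType) (inv : F -> F).
Hypothesis mulrV : forall x : F, x != 0 -> x * inv x = 1.
Hypothesis char0 : char_zero F.

Lemma natrF_neq0 n : (0 < n)%N -> (n%:R : F) != 0.
Proof. by move=> n0; apply/eqP => /(@char0 n 0) n_eq0; rewrite n_eq0 in n0. Qed.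

Lemma inv_unique x z : x * z = 1 -> inv x = z.
Proof.
move=> xz; have x0 : x != 0.
  by apply/eqP => x0; move: xz; rewrite x0 mul0r => /eqP; rewrite eq_sym oner_eq0.
by rewrite -[inv x]mulr1 -xz mulrA (mulrC (inv x)) mulrV // mul1r.
Qed.

Lemma invM x y : x != 0 -> y != 0 -> inv (x * y) = inv x * inv y.
Proof. by move=> x0 y0; apply: inv_unique; rewrite mulrACA !mulrV // mulr1. Qed.

Lemma rat_ge0_frac q : 0 <= q -> exists a b : nat,
  [/\ (0 < b)%N, q = a%:R / b%:R & ratF inv q = a%:R * inv b%:R].
Proof.
move=> q0; exists (absz (numq q)), (absz (denq q)); split => //.
  by rewrite absz_gt0 denq_neq0.
by rewrite !natr_absz !ger0_norm ?numq_ge0 ?denq_ge0 // divq_num_den.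
Qed.

(* [ratF] is defined through the reduced fraction of [q]; this lemma lets any
   fraction stand for it. *)
Lemma ratF_frac q a b : (0 < b)%N -> q = a%:R / b%:R -> ratF inv q = a%:R * inv b%:R.
Proof.
move=> b0 qE; have q0 : 0 <= q by rewrite qE divr_ge0.
have [a' [b' [b'0 qE' ->]]] := rat_ge0_frac q0.
have /eqP abE : (a * b' == a' * b)%N.
  by rewrite -(@eqr_nat rat) !natrM -eqr_div ?pnatr_eq0 -?lt0n // -qE -qE'.
have abE' : (a%:R * b'%:R : F) = a'%:R * b%:R by rewrite -!natrM abE.
transitivity (a%:R * b'%:R * (inv b%:R * inv b'%:R) : F).
  by rewrite abE' (mulrC (inv b%:R)) mulrACA mulrV ?natrF_neq0 // mulr1.
by rewrite mulrACA mulrV ?natrF_neq0 // mulr1.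
Qed.

Lemma ratF_nat n : ratF inv n%:R = n%:R.
Proof.
rewrite (@ratF_frac _ n 1) ?divr1 //.
by rewrite (@inv_unique 1 1) ?mulr1.
Qed.

Lemma ratF0 : ratF inv 0 = 0. Proof. exact: (ratF_nat 0). Qed.

Lemma ratF1 : ratF inv 1 = 1. Proof. exact: (ratF_nat 1). Qed.

Lemma ratFD q r : 0 <= q -> 0 <= r -> ratF inv (q + r) = ratF inv q + ratF inv r.
Proof.
move=> /rat_ge0_frac [a [b [b0 -> ->]]] /rat_ge0_frac [c [d [d0 -> ->]]].
have [b0' d0'] := (natrF_neq0 b0, natrF_neq0 d0).
rewrite (@ratF_frac _ (a * d + c * b) (b * d)) ?muln_gt0 ?b0 //.
  rewrite natrM invM // natrD !natrM mulrDl.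
  rewrite -mulrA (mulrCA d%:R) mulrV // mulr1.
  by rewrite -mulrA (mulrA b%:R) mulrV // mul1r.
rewrite natrD !natrM; field.
by rewrite !pnatr_eq0 -!lt0n b0 d0.
Qed.

Lemma ratFM q r : 0 <= q -> 0 <= r -> ratF inv (q * r) = ratF inv q * ratF inv r.
Proof.
move=> /rat_ge0_frac [a [b [b0 -> ->]]] /rat_ge0_frac [c [d [d0 -> ->]]].
rewrite (@ratF_frac _ (a * c) (b * d)) ?muln_gt0 ?b0 //.
  by rewrite !natrM invM ?natrF_neq0 //; ring.
rewrite !natrM; field.
by rewrite !pnatr_eq0 -!lt0n b0 d0.
Qed.

Lemma sp_ratF (R : F -> F -> Prop) q r : semiring_preorder R -> R 1 0 ->
  0 <= q -> q <= r -> R (ratF inv r) (ratF inv q).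
Proof.
move=> spR R10 q0 qr; rewrite -(subrKC q r) ratFD ?subr_ge0 //.
exact: sp_addr_ge.
Qed.

Lemma sp_mulV_cancel (R : F -> F -> Prop) w a b c : semiring_preorder R -> w != 0 ->
  R (w * a + c) (w * b + c) -> R (a + c * inv w) (b + c * inv w).
Proof.
move=> spR w0 /(sp_mulr spR (inv w)).
by rewrite !mulrDl -!mulrA !(mulrCA w) mulrV // !mulr1.
Qed.

(* Shift by 1 to make [q] positive, iterate [q + 1 >= r + 1] to get past any
   bound, then rescale. *)
Lemma sp_ratF_collapse (R : F -> F -> Prop) q r :
  semiring_preorder R -> R 1 0 -> 0 <= q -> q < r -> R (ratF inv q) (ratF inv r) ->
  forall s t, 0 < s -> 0 <= t -> R (ratF inv s) (ratF inv t).
Proof.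
move=> spR R10 q0 qr qRr s t s0 t0.
set q1 := q + 1; set dl := r - q.
have [q1_gt0 dl_gt0] : 0 < q1 /\ 0 < dl by rewrite subr_gt0 ltr_wpDl.
have [q1_ge0 dl_ge0] := (ltW q1_gt0, ltW dl_gt0).
have step : R (ratF inv q1) (ratF inv (q1 + dl)).
  have r0 : 0 <= r := le_trans q0 (ltW qr).
  have := sp_addr spR 1 qRr; rewrite -ratF1 -!ratFD //.
  by rewrite /q1 /dl addrAC subrKC.
have iter k : R (ratF inv q1) (ratF inv (q1 + k%:R * dl)).
  elim: k => [|k IH]; first by rewrite mul0r addr0; exact: sp_refl.
  apply: (sp_trans spR IH); have := sp_addr spR (ratF inv (k%:R * dl)) step.
  have -> : q1 + k.+1%:R * dl = q1 + dl + k%:R * dl.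
    by rewrite -natr1 mulrDl mul1r addrA addrAC.
  have kdl_ge0 : 0 <= k%:R * dl by rewrite mulr_ge0.
  by rewrite -!ratFD // addr_ge0.
set k := Num.Def.archi_bound (t * q1 / s / dl).
have /ltW tk : t * q1 / s < q1 + k%:R * dl.
  rewrite ltr_wpDl // -ltr_pdivrMr //.
  by apply: archi_boundP; rewrite !divr_ge0 ?mulr_ge0 // ltW.
have tq_ge0 : 0 <= t * q1 / s by rewrite divr_ge0 ?mulr_ge0 // ltW.
have sq_ge0 : 0 <= s / q1 by rewrite divr_ge0 // ltW.
have q1_t := sp_trans spR (iter k) (sp_ratF spR R10 tq_ge0 tk).
have := sp_mulr spR (ratF inv (s / q1)) q1_t.
rewrite -!ratFM // mulrC divfK ?gt_eqF //.
by have -> : t * q1 / s * (s / q1) = t by field; rewrite !gt_eqF.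
Qed.

End RationalScalars.

Lemma monotone_hom_sub (F : comNzSemiRingType) (ge R : F -> F -> Prop)
    (RR : realType) (f : F -> RR) :
  (forall a b, ge a b -> R a b) -> monotone_hom R f -> monotone_hom ge f.
Proof.
by move=> geR [f_ge0 [f0 f1 fD fM f_mono]]; split=> //; split=> // a b /geR/f_mono.
Qed.

Section MonotoneHom.
Variables (F : comNzSemiRingType) (inv : F -> F) (ge : F -> F -> Prop).
Variables (R : realType) (f : F -> R).
Hypothesis hom_f : monotone_hom ge f.

Lemma hom_ge0 a : 0 <= f a. Proof. by case: hom_f. Qed.
Lemma hom0 : f 0 = 0. Proof. by case: hom_f => _ []. Qed.
Lemma hom1 : f 1 = 1. Proof. by case: hom_f => _ []. Qed.
Lemma homD a b : f (a + b) = f a + f b. Proof. by case: hom_f => _ [] _ _ ->. Qed.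
Lemma homM a b : f (a * b) = f a * f b. Proof. by case: hom_f => _ [] _ _ _ ->. Qed.
Lemma hom_mono a b : ge a b -> f b <= f a.
Proof. by case: hom_f => _ [] _ _ _ _; apply. Qed.

Lemma hom_sum n (g : 'I_n -> F) : f (\sum_(i < n) g i) = \sum_(i < n) f (g i).
Proof.
by apply: (big_ind2 (fun a b => f a = b)) => [|a b c d <- <-|]; rewrite ?hom0 ?homD.
Qed.

Lemma homX a n : f (a ^+ n) = f a ^+ n.
Proof. by elim: n => [|n IH]; rewrite ?expr0 ?hom1 // !exprS homM IH. Qed.

Lemma hom_nat n : f n%:R = n%:R.
Proof. by elim: n => [|n IH]; rewrite ?mulr0n ?hom0 // -!natr1 homD IH hom1. Qed.

Hypothesis mulrV : forall x : F, x != 0 -> x * inv x = 1.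

Lemma hom_gt0 a : a != 0 -> 0 < f a.
Proof.
move=> a0; rewrite lt_def hom_ge0 andbT; apply/eqP => fa0.
by have /eqP := hom1; rewrite -(mulrV a0) homM fa0 mul0r eq_sym oner_eq0.
Qed.

Lemma homV a : a != 0 -> f (inv a) = (f a)^-1.
Proof.
move=> a0; have fa0 := lt0r_neq0 (hom_gt0 a0).
by rewrite -[LHS]mul1r -(mulVf fa0) -mulrA -homM mulrV // hom1 mulr1.
Qed.

Hypothesis char0 : char_zero F.

Lemma hom_ratF q : 0 <= q -> f (ratF inv q) = ratr q.
Proof.
move=> q0; have [a [b [b0 -> ->]]] := rat_ge0_frac inv q0.
by rewrite homM homV ?natrF_neq0 // !hom_nat fmorph_div /= !ratr_nat.
Qed.

Lemma hom_evalQ p a : nonneg_poly p -> f (evalQ inv p a) = evalR p (f a).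
Proof.
move=> p_ge0; rewrite /evalQ /evalR.
rewrite !(@horner_map_wide _ _ _ p _ (size p)) ?rmorph0 ?ratF0 //.
by rewrite hom_sum; apply: eq_bigr => i _; rewrite homM homX hom_ratF.
Qed.

End MonotoneHom.

Section SupHom.
Variables (F : comNzSemiRingType) (inv : F -> F) (R : F -> F -> Prop) (RR : realType).
Hypotheses (mulrV : forall x : F, x != 0 -> x * inv x = 1) (char0 : char_zero F).
Hypotheses (spR : semiring_preorder R) (R10 : R 1 0).
Hypothesis R_total : forall a b, R a b \/ R b a.
Hypothesis R_archimedean : forall a, exists n : nat, R n%:R a.
Hypothesis R_ratF : forall q r, 0 <= q -> 0 <= r -> R (ratF inv q) (ratF inv r) -> r <= q.

Definition lower_rats (a : F) : set RR :=
  [set ratr q | q in [set q : rat | 0 <= q /\ R a (ratF inv q)]].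

Definition sup_hom (a : F) : RR := sup (lower_rats a).

Lemma lower_rats_has_sup a : has_sup (lower_rats a).
Proof.
split.
  exists 0, 0%Q; last exact: rmorph0.
  by split; rewrite //= ratF0 //; exact: sp_ge0.
have [n an] := R_archimedean a.
exists n%:R => _ [q [q0 aq] <-]; rewrite -(ratr_nat RR) ler_rat.
by apply: R_ratF => //; rewrite ratF_nat //; exact: sp_trans an aq.
Qed.

Lemma sup_hom_ge a q : 0 <= q -> R a (ratF inv q) -> ratr q <= sup_hom a.
Proof. by move=> q0 aq; apply: sup_upper_bound (lower_rats_has_sup a) _ _; exists q. Qed.

Lemma sup_hom_le a q : 0 <= q -> R (ratF inv q) a -> sup_hom a <= ratr q.
Proof.
move=> q0 qa; apply: ge_sup; first by case: (lower_rats_has_sup a).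
move=> _ [r [r0 ar] <-]; rewrite ler_rat; apply: R_ratF => //.
exact: sp_trans qa ar.
Qed.

Lemma sup_hom_ge0 a : 0 <= sup_hom a.
Proof.
by rewrite -(rmorph0 ratr); apply: sup_hom_ge; rewrite // ratF0 //; exact: sp_ge0.
Qed.

Lemma sup_hom_ratF q : 0 <= q -> sup_hom (ratF inv q) = ratr q.
Proof.
by move=> q0; apply/le_anti; rewrite sup_hom_le ?sup_hom_ge //; exact: sp_refl.
Qed.

Lemma sup_hom_lower_approx a (eta : RR) : 0 < eta ->
  exists q, [/\ 0 <= q, R a (ratF inv q) & sup_hom a - eta < ratr q].
Proof.
move=> eta0; have [_ [q [q0 aq] <-] lt_q] := sup_adherent eta0 (lower_rats_has_sup a).
by exists q.
Qed.

Lemma sup_hom_upper_approx a (eta : RR) : 0 < eta ->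
  exists q, [/\ 0 <= q, R (ratF inv q) a & ratr q < sup_hom a + eta].
Proof.
move=> eta0; have /rat_in_itvoo [q] : sup_hom a < sup_hom a + eta by rewrite ltrDl.
rewrite in_itv /= => /andP [aq qa].
have q0 : 0 <= q by rewrite -(ler0q RR); apply: le_trans (sup_hom_ge0 a) (ltW aq).
exists q; split=> //; case: (R_total (ratF inv q) a) => // /(sup_hom_ge q0).
by rewrite leNgt aq.
Qed.

Lemma sup_hom_mono a b : R a b -> sup_hom b <= sup_hom a.
Proof.
move=> ab; rewrite leNgt -subr_gt0; apply/negP => /(sup_hom_upper_approx a).
case=> q [q0 qa]; rewrite addrC subrK; apply/negP; rewrite -leNgt.
by apply: sup_hom_le => //; exact: sp_trans qa ab.
Qed.

Lemma sup_homD a b : sup_hom (a + b) = sup_hom a + sup_hom b.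
Proof.
apply/le_anti/andP; split; apply/ler_addgt0Pr => e e0;
  have e2 : 0 < e / 2 by rewrite divr_gt0.
- have [q1 [q1_ge0 q1a lt_q1]] := sup_hom_upper_approx a e2.
  have [q2 [q2_ge0 q2b lt_q2]] := sup_hom_upper_approx b e2.
  have := @sup_hom_le (a + b) _ (addr_ge0 q1_ge0 q2_ge0).
  rewrite ratFD // rmorphD => /(_ (sp_add spR q1a q2b)); lra.
- have [q1 [q1_ge0 aq1 lt_q1]] := sup_hom_lower_approx a e2.
  have [q2 [q2_ge0 bq2 lt_q2]] := sup_hom_lower_approx b e2.
  have := @sup_hom_ge (a + b) _ (addr_ge0 q1_ge0 q2_ge0).
  rewrite ratFD // rmorphD => /(_ (sp_add spR aq1 bq2)); lra.
Qed.

Lemma sup_homM_le a b : sup_hom (a * b) <= sup_hom a * sup_hom b.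
Proof.
set A := sup_hom a; set B := sup_hom b.
have [A0 B0] : 0 <= A /\ 0 <= B by split; apply: sup_hom_ge0.
apply/ler_addgt0Pr => e e0; set h := Num.min 1 (e / (A + B + 1)).
have h0 : 0 < h by rewrite lt_min ltr01 divr_gt0 //; lra.
have h1 : h <= 1 by rewrite ge_min lexx.
have he : h * (A + B + 1) <= e by rewrite -ler_pdivlMr ?ge_min ?lexx ?orbT //; lra.
have [q1 [q1_ge0 q1a lt_q1]] := sup_hom_upper_approx a h0.
have [q2 [q2_ge0 q2b lt_q2]] := sup_hom_upper_approx b h0.
rewrite -/A in lt_q1; rewrite -/B in lt_q2.
have := @sup_hom_le (a * b) _ (mulr_ge0 q1_ge0 q2_ge0).
rewrite ratFM // rmorphM => /(_ (sp_mul spR q1a q2b)) le_ab.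
have : (ratr q1 : RR) * ratr q2 <= (A + h) * (B + h).
  by apply: ler_pM; rewrite ?ler0q // ltW.
have : h * h <= h * 1 by rewrite ler_wpM2l // ltW.
nra.
Qed.

Lemma sup_homM_ge a b : sup_hom a * sup_hom b <= sup_hom (a * b).
Proof.
set A := sup_hom a; set B := sup_hom b.
have [A0 B0] : 0 <= A /\ 0 <= B by split; apply: sup_hom_ge0.
apply/ler_addgt0Pr => e e0; set h := e / (A + B + 1).
have h0 : 0 < h by rewrite divr_gt0 //; lra.
have he : h * (A + B + 1) = e by rewrite divfK // gt_eqF //; lra.
have [q1 [q1_ge0 aq1 lt_q1]] := sup_hom_lower_approx a h0.
have [q2 [q2_ge0 bq2 lt_q2]] := sup_hom_lower_approx b h0.
rewrite -/A in lt_q1; rewrite -/B in lt_q2.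
have := @sup_hom_ge (a * b) _ (mulr_ge0 q1_ge0 q2_ge0).
rewrite ratFM // rmorphM => /(_ (sp_mul spR aq1 bq2)) le_ab.
have r1 : (ratr q1 : RR) <= A := sup_hom_ge q1_ge0 aq1.
have r2 : (ratr q2 : RR) <= B := sup_hom_ge q2_ge0 bq2.
have r20 : (0 : RR) <= ratr q2 by rewrite ler0q.
have : A * (B - ratr q2) <= A * h by rewrite ler_wpM2l //; lra.
have : ratr q2 * (A - ratr q1) <= ratr q2 * h by rewrite ler_wpM2l //; lra.
have : (ratr q2 : RR) * h <= B * h by rewrite ler_wpM2r // ltW.
nra.
Qed.

Lemma sup_hom_monotone : monotone_hom R sup_hom.
Proof.
split; first exact: sup_hom_ge0.
split; last exact: sup_hom_mono.
- by rewrite -(ratF0 mulrV char0) sup_hom_ratF // rmorph0.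
- by rewrite -(ratF1 mulrV char0) sup_hom_ratF // rmorph1.
- exact: sup_homD.
- by move=> a b; apply/le_anti; rewrite sup_homM_le sup_homM_ge.
Qed.

End SupHom.

Lemma exists_nat_div_le (C : nat) (d : rat) : 0 < d ->
  exists2 n : nat, (0 < n)%N & C%:R / n%:R <= d.
Proof.
move=> d0; have Cd0 : 0 <= C%:R / d by rewrite divr_ge0 // ltW.
exists (Num.Def.archi_bound (C%:R / d)).+1 => //.
rewrite ler_pdivrMr // mulrC -ler_pdivrMr //.
by apply: ltW; apply: lt_le_trans (archi_boundP Cd0) _; rewrite ler_nat.
Qed.

Section Separation.
Variables (F : comNzSemiRingType) (inv : F -> F) (ge : F -> F -> Prop) (u : F).
Hypotheses (psf : preordered_semifield inv ge) (char0 : char_zero F) (ge10 : ge 1 0).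
Hypothesis u_univ : poly_universal ge u.
Variable eps : rat.
Hypothesis eps0 : 0 < eps.
Variables x y : F.

Let mulrV := preordered_semifield_mulrV psf.
Let spge := preordered_semifield_sp psf.

Local Notation S := (geom_series inv u eps).
Local Notation T := (geom_term inv u eps).

Let u_ge1 : ge u 1. Proof. by case: u_univ. Qed.

Lemma ge_uX c j k : (j <= k)%N -> ge (c * u ^+ k) (c * u ^+ j).
Proof.
move=> jk; rewrite -(subnKC jk) exprD mulrA -[X in ge _ X]mulr1.
by apply: (sp_mull spge); rewrite -(expr1n F (k - j)); exact: (sp_exp spge _ u_ge1).
Qed.

Lemma geom_series_split m k : S (m + k) = S m + \sum_(i < k) T (m.+1 + i).
Proof. by rewrite /geom_series -addSn big_split_ord. Qed.

Lemma geom_series_ge_term m : ge (S m) (T m).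
Proof. by rewrite /geom_series big_ord_recr; exact: sp_addl_ge. Qed.

Lemma geom_series_ge_eps m : ge (S m) (ratF inv eps).
Proof. by rewrite /geom_series big_ord_recl /geom_term mulr1; exact: sp_addr_ge. Qed.

Lemma geom_series_mono m k : (m <= k)%N -> ge (S k) (S m).
Proof. by move=> mk; rewrite -(subnKC mk) geom_series_split; exact: sp_addr_ge. Qed.

Lemma ge_natr_uX d : exists C K : nat, ge (C%:R * u ^+ K) d.
Proof.
have [->|d0] := eqVneq d 0; first by exists 0%N, 0%N; rewrite mul0r; exact: sp_refl.
have [_ /(_ d d0) [p [_ pd]]] := u_univ.
exists (\sum_(i < size p) nth 0 p i)%N, (size p); apply: (sp_trans spge _ pd).
rewrite /evalN (@horner_map_wide _ _ _ _ _ (size p)) // natr_sum mulr_suml.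
by apply: sp_sum => // i; apply: ge_uX; exact: ltnW.
Qed.

Lemma geom_series_tail_ge M d :
  exists K n, (0 < n)%N /\ ge (\sum_(i < K.+1) T (M.+1 + i)) (d * inv n%:R).
Proof.
have [C [K CKd]] := ge_natr_uX d.
have [n n0 Cn] := exists_nat_div_le C (exprn_gt0 (M.+1 + K).+1 eps0).
exists K, n; split=> //; rewrite big_ord_recr /=.
apply: (sp_trans spge (sp_addl_ge spge ge10 _ _)).
have Cn_ge0 : 0 <= C%:R / n%:R :> rat by rewrite divr_ge0.
apply: (sp_trans spge (sp_mulr spge _ (sp_ratF mulrV char0 spge ge10 Cn_ge0 Cn))).
apply: (sp_trans spge (ge_uX _ (leq_addl M.+1 K))).
by rewrite (ratF_frac mulrV char0 n0 erefl) mulrAC; exact: sp_mulr.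
Qed.


(* Adding up [n] copies of the hypothesis and dividing by [n] shrinks the error
   [d] to [d / n], which a tail of the series absorbs. *)
Lemma geom_series_cancel (R : F -> F -> Prop) M d :
  semiring_preorder R -> (forall a b, ge a b -> R a b) ->
  R (x + S M + d) (y + d) -> exists m, R (x + S m) y.
Proof.
move=> spR geR h; have [K [n [n0 tail]]] := geom_series_tail_ge M d.
have := sp_mulV_cancel mulrV spR (natrF_neq0 char0 n0) (sp_muln_cancel spR n h).
move=> /(sp_trans spR)/(_ (geR _ _ (sp_addr_ge spge ge10 _ _))) cancelled.
exists (M + K.+1)%N; apply: (sp_trans spR _ cancelled); apply: geR.
by rewrite geom_series_split addrA; exact: sp_addl.
Qed.

Hypothesis series_nge : forall m, ~ ge (x + S m) y.

(* Otherwise [0 = 1 + t / s >= 1] would put [y] below [0]. *)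
Lemma addr_eq0_l (s t : F) : s + t = 0 -> s = 0.
Proof.
move=> st0; have [//|s0] := eqVneq s 0; case: (@series_nge 0%N).
have : 1 + t * inv s = 0 by rewrite -(mulrV s0) -mulrDl st0 mul0r.
move=> /(congr1 (fun z => z * y)); rewrite mul0r => ge_y.
have := sp_mulr spge y (sp_addr_ge spge ge10 1 (t * inv s)); rewrite mul1r ge_y.
by move=> /(sp_trans spge (sp_ge0 spge ge10 _)).
Qed.

Definition extend (A : set (F * F)) (a b : F) : Prop := ge a b \/ A (a, b).

Definition refutes (A : set (F * F)) : Prop :=
  semiring_preorder (extend A) /\ forall m, ~ extend A (x + S m) y.

Lemma refutes_bigcup (C : set (set (F * F))) :
  (C `<=` refutes)%classic -> total_on C subset ->
  refutes (\bigcup_(A in C) A)%classic.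
Proof.
move=> C_ref C_tot; set U := (\bigcup_(A in C) A)%classic.
have extendU a b : extend U a b -> ge a b \/ exists2 A, C A & extend A a b.
  by case=> [|[A CA Aab]]; [left | right; exists A => //; right].
have extend_sub A a b : C A -> extend A a b -> extend U a b.
  by move=> CA [|Aab]; [left | right; exists A].
have spA A : C A -> semiring_preorder (extend A) by case/C_ref.
split; first split.
- by move=> a; left; exact: sp_refl.
- move=> a b c /extendU [ab|[A CA ab]] /extendU [bc|[B CB bc]].
  + by left; exact: (sp_trans spge ab bc).
  + by apply: (extend_sub B) => //; apply: (sp_trans (spA B CB) _ bc); left.
  + by apply: (extend_sub A) => //; apply: (sp_trans (spA A CA) ab); left.
  + have [AB|BA] := C_tot A B CA CB.
    * apply: (extend_sub B) => //; apply: (sp_trans (spA B CB) _ bc).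
      by case: ab => [|/AB]; [left | right].
    * apply: (extend_sub A) => //; apply: (sp_trans (spA A CA) ab).
      by case: bc => [|/BA]; [left | right].
- move=> a b c /extendU [ab|[A CA ab]]; first by left; exact: sp_addr.
  by apply: (extend_sub A) => //; exact: (sp_addr (spA A CA) _ ab).
- move=> a b c /extendU [ab|[A CA ab]]; first by left; exact: sp_mulr.
  by apply: (extend_sub A) => //; exact: (sp_mulr (spA A CA) _ ab).
- move=> m /extendU [|[A CA]]; first exact: series_nge.
  by case: (C_ref A CA) => _; apply.
Qed.

Variable RR : realType.

Section Maximal.
Variable A0 : set (F * F).
Hypothesis A0_refutes : refutes A0.
Hypothesis A0_max : forall B, (A0 `<` B)%classic -> ~ refutes B.

Let R0 := extend A0.
Let spR0 : semiring_preorder R0. Proof. by case: A0_refutes. Qed.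
Let geR0 a b : ge a b -> R0 a b. Proof. by left. Qed.
Let R0_nge m : ~ R0 (x + S m) y. Proof. by case: A0_refutes => _; apply. Qed.

Lemma maximal_adjoin a b : ~ R0 a b -> exists m w, R0 (x + S m + w * b) (y + w * a).
Proof.
move=> nab; set B : set (F * F) := fun cd => adjoin R0 a b cd.1 cd.2.
have A0B : (A0 `<` B)%classic.
  split; first by move=> [c d] A0cd; apply: adjoin_sub; right.
  by move=> BA0; apply: nab; right; apply: BA0; exact: adjoin_pair.
have extendB c d : adjoin R0 a b c d <-> extend B c d.
  by split; [right | case=> [/geR0/adjoin_sub|]].
have spB : semiring_preorder (extend B) := sp_eq extendB (sp_adjoin a b spR0).
case: (EM (exists m, extend B (x + S m) y)) => [[m /extendB [w]]|nB].
  by exists m, w.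
by case: (A0_max A0B); split=> // m hm; apply: nB; exists m.
Qed.

Lemma maximal_total a b : R0 a b \/ R0 b a.
Proof.
case: (EM (R0 a b)) => [|nab]; [by left | right].
case: (EM (R0 b a)) => // nba; exfalso.
have [m1 [w1 h1]] := maximal_adjoin nab.
have [m2 [w2 h2]] := maximal_adjoin nba.
set M := maxn m1 m2.
have lift m w c : (m <= M)%N -> R0 (x + S M + w * c) (x + S m + w * c).
  by move=> mM; apply/geR0/(sp_addr spge)/(sp_addl spge); exact: geom_series_mono.
have {}h1 := sp_trans spR0 (lift _ _ _ (leq_maxl m1 m2)) h1.
have {}h2 := sp_trans spR0 (lift _ _ _ (leq_maxr m1 m2)) h2.
have [w1_0|w1_neq0] := eqVneq w1 0.
  by apply: (@R0_nge M); move: h1; rewrite w1_0 !mul0r !addr0.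
have w12_neq0 : w1 + w2 != 0 by apply: contra_neq w1_neq0 => /addr_eq0_l.
have := sp_mulV_cancel mulrV spR0 w12_neq0 (sp_cross spR0 h1 h2).
by case/(geom_series_cancel spR0 geR0) => m /R0_nge.
Qed.

(* Otherwise the term [eps^(K+2) u^(K+1)] of the series would dominate
   [C u^K >= y]. *)
Lemma maximal_bounds_u : exists N : nat, R0 N%:R u.
Proof.
case: (EM (exists N : nat, R0 N%:R u)) => // nN; exfalso.
have uN N : R0 u N%:R by case: (maximal_total u N%:R) => // Nu; case: nN; exists N.
have [C [K CKy]] := ge_natr_uX y.
have [N N0 CN] := exists_nat_div_le C (exprn_gt0 K.+2 eps0).
have N_gt0 : (0 : rat) < N%:R by rewrite ltr0n.
rewrite ler_pdivrMr // in CN.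
apply: (@R0_nge K.+1); apply: (sp_trans spR0 (geR0 (sp_addl_ge spge ge10 _ x))).
apply: (sp_trans spR0 (geR0 (geom_series_ge_term K.+1))).
rewrite /geom_term (exprSr u) mulrA; apply: (sp_trans spR0 (sp_mull spR0 _ (uN N))).
rewrite mulrAC -(ratF_nat mulrV char0 N) -ratFM ?exprn_ge0 ?ltW //.
apply/geR0/(sp_trans spge _ CKy)/(sp_mulr spge).
by rewrite -(ratF_nat mulrV char0); exact: (sp_ratF _ _ spge ge10 (ler0n _ _) CN).
Qed.

Lemma maximal_archimedean a : exists n : nat, R0 n%:R a.
Proof.
have [N uN] := maximal_bounds_u; have [C [K CKa]] := ge_natr_uX a.
exists (C * N ^ K)%N; rewrite natrM natrX.
exact: (sp_trans spR0 (sp_mull spR0 _ (sp_exp spR0 K uN)) (geR0 CKa)).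
Qed.

Lemma maximal_ratF q r : 0 <= q -> 0 <= r -> R0 (ratF inv q) (ratF inv r) -> r <= q.
Proof.
move=> q0 r0 qr; rewrite leNgt; apply/negP => lt_qr.
have [n ny] := maximal_archimedean y.
have := sp_ratF_collapse mulrV char0 spR0 (geR0 ge10) q0 lt_qr qr eps0 (ler0n _ n).
rewrite ratF_nat // => eps_n.
apply: (@R0_nge 0%N); apply: (sp_trans spR0 (geR0 (sp_addl_ge spge ge10 _ x))).
exact: (sp_trans spR0 (geR0 (geom_series_ge_eps 0)) (sp_trans spR0 eps_n ny)).
Qed.

Lemma maximal_separates : exists f : F -> RR, monotone_hom ge f /\ f x < f y.
Proof.
have hom_sup := sup_hom_monotone RR mulrV char0 spR0 (geR0 ge10)
  maximal_total maximal_archimedean maximal_ratF.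
exists (sup_hom inv R0 RR); split; first exact: monotone_hom_sub hom_sup.
have yx : R0 y (x + S 0) by case: (maximal_total (x + S 0) y) => // /R0_nge.
have := hom_mono hom_sup yx; rewrite (homD hom_sup).
have := hom_mono hom_sup (geR0 (geom_series_ge_eps 0)).
rewrite (hom_ratF hom_sup mulrV char0 (ltW eps0)).
have : (0 : RR) < ratr eps by rewrite ltr0q.
lra.
Qed.

End Maximal.

Lemma series_nge_separates : exists f : F -> RR, monotone_hom ge f /\ f x < f y.
Proof.
have [A0 [A0_refutes A0_max]] := Zorn_bigcup refutes_bigcup.
exact: maximal_separates A0_refutes A0_max.
Qed.

End Separation.

Lemma hom_ge_series_ge (RR : realType) (F : comNzSemiRingType) (inv : F -> F)
    (ge : F -> F -> Prop) (u x y : F) :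
  preordered_semifield inv ge -> char_zero F -> ge 1 0 -> poly_universal ge u ->
  hom_ge RR ge x y -> series_ge inv ge u x y.
Proof.
move=> psf char0 ge10 u_univ xy eps eps0.
case: (EM (exists m, ge (x + geom_series inv u eps m) y)) => // /forallNP nge.
have [f [hom_f]] := series_nge_separates psf char0 ge10 u_univ eps0 nge RR.
by rewrite ltNge xy.
Qed.

Lemma geometric_sum_le2 (R : realFieldType) (t : R) n :
  0 <= t -> t <= 2^-1 -> \sum_(j < n) t ^+ j <= 2.
Proof.
move=> t0 t_le; elim: n => [|n IH]; first by rewrite big_ord0 ler0n.
rewrite big_ord_recl expr0 (eq_bigr (fun j : 'I_n => t * t ^+ j)); last first.
  by move=> j _; rewrite exprS.
rewrite -mulr_sumr; have : t * \sum_(j < n) t ^+ j <= 2^-1 * 2.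
  by apply: ler_pM => //; apply: sumr_ge0 => j _; exact: exprn_ge0.
rewrite mulVf ?pnatr_eq0 //; lra.
Qed.

Lemma exists_rat_gt0_lt (R : realType) (d : R) : 0 < d ->
  exists e : rat, 0 < e /\ ratr e < d.
Proof.
move=> d0; have [e] := rat_in_itvoo d0; rewrite in_itv /= => /andP [e0 ed].
by exists e; rewrite -(ltr0q R).
Qed.

Lemma geom_sum_ratr_le (R : realType) (e : rat) (r : R) m :
  0 < e -> 0 <= r -> ratr e * (2 * (r + 1)) <= 1 ->
  \sum_(j < m.+1) ratr (e ^+ j.+1) * r ^+ j <= 2 * ratr e.
Proof.
move=> e0 r0 small; have e0' : (0 : R) < ratr e by rewrite ltr0q.
rewrite (eq_bigr (fun j : 'I_m.+1 => ratr e * (ratr e * r) ^+ j)); last first.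
  by move=> j _; rewrite rmorphXn exprS [in RHS]exprMn mulrA.
rewrite -mulr_sumr [_ * ratr e]mulrC ler_pM2l //.
apply: geometric_sum_le2; first by rewrite mulr_ge0 // ltW.
rewrite -[2^-1]mul1r ler_pdivlMr ?ltr0n //; apply: le_trans small.
nra.
Qed.

Lemma exists_rat_geom_small (R : realType) (r d : R) : 0 <= r -> 0 < d ->
  exists e : rat, [/\ 0 < e, ratr e * (2 * (r + 1)) <= 1 & 2 * ratr e <= d].
Proof.
move=> r0 d0; have r1_gt0 : 0 < 2 * (r + 1) by lra.
have m0 : 0 < Num.min (d / 2) (2 * (r + 1))^-1 by rewrite lt_min invr_gt0 r1_gt0; lra.
have [e [e0 /ltW]] := exists_rat_gt0_lt m0; rewrite le_min => /andP [e_d e_r].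
exists e; split=> //; last by lra.
by rewrite -ler_pdivlMr // mul1r.
Qed.

Section Directions.
Variables (RR : realType) (F : comNzSemiRingType) (inv : F -> F) (ge : F -> F -> Prop).
Hypotheses (psf : preordered_semifield inv ge) (char0 : char_zero F).
Variables u x y : F.

Let mulrV := preordered_semifield_mulrV psf.

Lemma series_ge_hom_ge : series_ge inv ge u x y -> hom_ge RR ge x y.
Proof.
move=> xy f hom_f; apply/ler_addgt0Pr => d d0.
have [e [e0 e_r e_d]] := exists_rat_geom_small (hom_ge0 hom_f u) d0.
have [m /(hom_mono hom_f)] := xy e e0.
rewrite (homD hom_f) /geom_series (hom_sum hom_f).
under eq_bigr => j _ do rewrite /geom_term (homM hom_f) (homX hom_f)
  (hom_ratF hom_f mulrV char0 (exprn_ge0 _ (ltW e0))).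
have := geom_sum_ratr_le m e0 (hom_ge0 hom_f u) e_r.
lra.
Qed.

Lemma add_poly_ge_hom_ge : add_poly_ge RR inv ge u x y -> hom_ge RR ge x y.
Proof.
move=> xy f hom_f; apply/ler_addgt0Pr => d d0.
have [e [e0 e_d]] := exists_rat_gt0_lt d0.
have [p [p_ge0 [pe /(hom_mono hom_f)]]] := xy (f u) e (hom_ge0 hom_f u) e0.
rewrite (homD hom_f) (hom_evalQ hom_f mulrV char0 u p_ge0); lra.
Qed.

Lemma mul_poly_ge_hom_ge : mul_poly_ge RR inv ge u x y -> hom_ge RR ge x y.
Proof.
move=> xy f hom_f; apply/ler_addgt0Pr => d d0.
have fx0 := hom_ge0 hom_f x.
have d_fx : 0 < d / (f x + 1) by rewrite divr_gt0 //; lra.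
have [e [e0 e_d]] := exists_rat_gt0_lt d_fx.
have [p [p_ge0 [pe /(hom_mono hom_f)]]] := xy (f u) e (hom_ge0 hom_f u) e0.
rewrite (homM hom_f) (hom_evalQ hom_f mulrV char0 u p_ge0) => yx.
have : evalR p (f u) * f x <= (1 + ratr e) * f x by apply: ler_wpM2r.
have : ratr e * (f x + 1) < d by rewrite -ltr_pdivlMr //; lra.
have : (0 : RR) <= ratr e by rewrite ler0q ltW.
nra.
Qed.

Lemma series_ge_add_poly_ge : series_ge inv ge u x y -> add_poly_ge RR inv ge u x y.
Proof.
move=> xy r eps r0 eps0; have eps0' : (0 : RR) < ratr eps by rewrite ltr0q.
have [e [e0 e_r e_eps]] := exists_rat_geom_small r0 eps0'.
have [m xy_m] := xy e e0.
exists (\poly_(j < m.+1) e ^+ j.+1); split; [|split].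
- by move=> i; rewrite coef_poly; case: ifP => // _; rewrite exprn_ge0 // ltW.
- rewrite /evalR (@horner_map_wide _ _ _ _ r m.+1) ?rmorph0 ?size_poly //.
  under eq_bigr => i _ do rewrite coef_poly ltn_ord.
  exact: le_trans (geom_sum_ratr_le m e0 r0 e_r) e_eps.
- rewrite /evalQ (@horner_map_wide _ _ _ _ u m.+1) ?ratF0 ?size_poly //.
  by under eq_bigr => i _ do rewrite coef_poly ltn_ord.
Qed.

End Directions.

Lemma hom_ge_mul_poly_ge (RR : realType) (F : comNzSemiRingType) (inv : F -> F)
    (ge : F -> F -> Prop) (u x y : F) :
  preordered_semifield inv ge -> char_zero F -> ge 1 0 -> poly_universal ge u ->
  x != 0 -> hom_ge RR ge x y -> mul_poly_ge RR inv ge u x y.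
Proof.
move=> psf char0 ge10 u_univ x0 xy r eps r0 eps0.
have mulrV := preordered_semifield_mulrV psf.
have yx1 : hom_ge RR ge 1 (y * inv x).
  move=> f hom_f; rewrite (homM hom_f) (homV hom_f mulrV x0) (hom1 hom_f).
  by rewrite ler_pdivrMr ?(hom_gt0 hom_f mulrV) // mul1r; exact: xy.
have := hom_ge_series_ge psf char0 ge10 u_univ yx1.
move=> /(series_ge_add_poly_ge psf char0) /(_ r eps r0 eps0) [p [p_ge0 [pr yxp]]].
exists (1 + p); split; [|split].
- by move=> i; rewrite coefD coef1 addr_ge0 ?ler0n.
- rewrite /evalR horner_mapD ?rmorph0 // => [|i]; last by rewrite rmorphD.
  by rewrite horner_map1 ?rmorph0 ?rmorph1 // lerD2l.
- rewrite /evalQ horner_mapD ?ratF0 // => [|i]; last by rewrite ratFD // coef1 ler0n.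
  rewrite horner_map1 ?ratF0 ?ratF1 //.
  have := sp_mulr (preordered_semifield_sp psf) x yxp.
  by rewrite mulrDl mul1r -mulrA (mulrC (inv x)) mulrV // mulr1.
Qed.

Theorem theorem3p1 (R : realType) (F : comNzSemiRingType) (inv : F -> F)
    (ge : F -> F -> Prop) (u : F) :
  preordered_semifield inv ge -> char_zero F -> ge 1 0 ->
  poly_universal ge u ->
  forall x y : F, x != 0 -> y != 0 ->
  [/\ ((forall f : F -> R, monotone_hom ge f -> f y <= f x) <->
       (forall eps : rat, 0 < eps -> exists m : nat,
          ge (x + \sum_(j < m.+1) ratF inv (eps ^+ j.+1) * u ^+ j) y)),
      ((forall f : F -> R, monotone_hom ge f -> f y <= f x) <->
       (forall (r : R) (eps : rat), 0 <= r -> 0 < eps ->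
          exists p : {poly rat}, nonneg_poly p /\
            evalR p r <= ratr eps /\ ge (x + evalQ inv p u) y)) &
      ((forall f : F -> R, monotone_hom ge f -> f y <= f x) <->
       (forall (r : R) (eps : rat), 0 <= r -> 0 < eps ->
          exists p : {poly rat}, nonneg_poly p /\
            evalR p r <= 1 + ratr eps /\ ge (evalQ inv p u * x) y))].
Proof.
move=> psf char0 ge10 u_univ x y x0 _.
have hom_series := @hom_ge_series_ge R F inv ge u x y psf char0 ge10 u_univ.
have series_hom := @series_ge_hom_ge R F inv ge psf char0 u x y.
split; split.
- exact: hom_series.
- exact: series_hom.
- by move=> /hom_series; exact: series_ge_add_poly_ge.
- exact: add_poly_ge_hom_ge.
- exact: hom_ge_mul_poly_ge.
- exact: mul_poly_ge_hom_ge.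
Qed.
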